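(* Let $\Phi$ be an irreducible crystallographic root system with positive system $\Phi^+$ and let $k$ be a positive integer. If $\alpha\in\Phi^+$ and $H_\alpha^r$ is a ceiling of a dominant region $R$ of the $k$-Catalan arrangement of $\Phi$, then $\alpha$ is a rank $r$ indecomposable element of $\mathcal{I}=\theta(R)$.
   Context: $\Phi$ lives in a Euclidean space $V$ with inner product $\langle\cdot,\cdot\rangle$, simple system $S$. $H_\alpha^r=\{x\mid\langle x,\alpha\rangle=r\}$. The $k$-Catalan arrangement consists of $H_\alpha^r$, $\alpha\in\Phi$, $r\in\{0,\ldots,k\}$; regions are components of its complement; $R$ is dominant if $\langle x,\alpha\rangle>0$ for all $\alpha\in\Phi^+$, $x\in R$. Walls of $R$ are hyperplanes of the arrangement supporting a facet of $R$; a ceiling is a wall not containing the origin with the origin on the same side as $R$. Root poset: $\alpha\le\beta$ iff $\beta-\alpha$ is a nonnegative integer combination of $S$; ideals are down-closed. $\theta(R)=(I_1,\ldots,I_k)$ with $I_i=\{\alpha\in\Phi^+\mid\langle x,\alpha\rangle<i\ \forall x\in R\}$. For a chain $\mathcal{I}=(I_1,\ldots,I_k)$, $r_\alpha(\mathcal{I})=\min\{r_1+\cdots+r_m\mid\alpha=\alpha_1+\cdots+\alpha_m,\alpha_i\in I_{r_i},r_i\in\{1,\ldots,k\}\}$, $\infty$ if none. With $I_0=\varnothing$ and sumsets $A+B=\{a+b\}$, $\alpha\in\Phi^+$ is a rank $r$ indecomposable element of $\mathcal{I}$ if $\alpha\in I_r$ and (i) $r_\alpha(\mathcal{I})=r$;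 (ii) $\alpha\notin I_i+I_j$ whenever $i+j=r$; (iii) whenever $\beta\in\Phi^+$ and $r_{\alpha+\beta}(\mathcal{I})=t\le k$, then $\beta\in I_{t-r}$. *)

From HB Require Import structures.
From mathcomp Require Import all_boot all_order all_algebra.
From mathcomp Require Import all_classical all_reals all_analysis.
Set Implicit Arguments. Unset Strict Implicit. Unset Printing Implicit Defensive.
Import Order.TTheory GRing.Theory Num.Theory.
Import numFieldNormedType.Exports.
Local Open Scope classical_set_scope.
Local Open Scope ring_scope.

Section Defs.
Variables (R : realType) (n : nat).
Notation V := 'rV[R]_n.

Definition ip (x y : V) : R := \sum_(i < n) x 0 i * y 0 i.

Definition hyperplane (a : V) (r : R) : set V := [set x | ip x a = r].

Definition root_system (Phi : seq V) : Prop :=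
  [/\ (0 : V) \notin Phi,
      (<<Phi>>%VS = fullv),
      (forall a, a \in Phi -> forall c : R, c *: a \in Phi -> c = 1 \/ c = -1),
      (forall a b, a \in Phi -> b \in Phi ->
          b - ((2 * ip b a) / ip a a) *: a \in Phi) &
      (forall a b, a \in Phi -> b \in Phi ->
          (2 * ip b a) / ip a a \is a Num.int)].

Definition irreducible_rs (Phi : seq V) : Prop :=
  forall P : pred V,
    (exists2 a, a \in Phi & P a) -> (exists2 b, b \in Phi & ~~ P b) ->
    exists a b, [/\ a \in Phi, b \in Phi, P a, ~~ P b & ip a b != 0].

Definition nonneg_int_comb (S : seq V) (v : V) : Prop :=
  exists c : 'I_(size S) -> nat, v = \sum_(i < size S) (c i)%:R *: S`_i.

Definition simple_system (Phi S : seq V) : Prop :=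
  [/\ {subset S <= Phi}, free S &
      forall a, a \in Phi -> nonneg_int_comb S a \/ nonneg_int_comb S (- a)].

Definition positive_root (Phi S : seq V) (a : V) : Prop :=
  a \in Phi /\ nonneg_int_comb S a.

Definition catalan_complement (Phi : seq V) (k : nat) : set V :=
  [set x | forall a r, a \in Phi -> (r <= k)%N -> ip x a != r%:R].

Definition catalan_region (Phi : seq V) (k : nat) (Rg : set V) : Prop :=
  exists x, catalan_complement Phi k x /\
            Rg = connected_component (catalan_complement Phi k) x.

Definition dominant (Phi S : seq V) (Rg : set V) : Prop :=
  forall x a, Rg x -> positive_root Phi S a -> 0 < ip x a.

(* H supports a facet of Rg: H meets the closure of Rg in a set with
   nonempty interior relative to H (a face of codimension one). *)
Definition supports_facet (Rg H : set V) : Prop :=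
  exists2 x, H x & exists2 e : R, 0 < e &
     forall y, H y -> `|y - x| < e -> closure Rg y.

Definition wall (Phi : seq V) (k : nat) (Rg : set V) (a : V) (r : nat) : Prop :=
  [/\ a \in Phi, (r <= k)%N & supports_facet Rg (hyperplane a r%:R)].

(* Ceiling: a wall not containing the origin, with the origin on the same
   side of it as Rg. *)
Definition ceiling (Phi : seq V) (k : nat) (Rg : set V) (a : V) (r : nat) : Prop :=
  [/\ wall Phi k Rg a r, ~ hyperplane a r%:R 0 &
      forall x, Rg x -> 0 < (ip 0 a - r%:R) * (ip x a - r%:R)].

(* theta(R) = (I_1, ..., I_k), with the convention I_0 = empty. *)
Definition theta (Phi S : seq V) (Rg : set V) (i : nat) : set V :=
  [set a | i != 0%N /\ positive_root Phi S a /\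
           forall x, Rg x -> ip x a < i%:R].

Definition decomp (I : nat -> set V) (k : nat) (v : V) (t : nat) : Prop :=
  exists s : seq (V * nat),
    [/\ s != [::],
        forall p, p \in s -> [/\ (1 <= p.2)%N, (p.2 <= k)%N & I p.2 p.1],
        v = \sum_(p <- s) p.1 &
        t = (\sum_(p <- s) p.2)%N].

Definition r_val (I : nat -> set V) (k : nat) (v : V) (t : nat) : Prop :=
  decomp I k v t /\ forall t', decomp I k v t' -> (t <= t')%N.

Definition rank_indecomposable (Phi S : seq V) (k : nat) (I : nat -> set V)
    (a : V) (r : nat) : Prop :=
  [/\ I r a,
      r_val I k a r,
      (forall i j, (i + j)%N = r ->
          ~ exists b c, [/\ I i b, I j c & a = b + c]) &
      (forall b t, positive_root Phi S b -> r_val I k (a + b) t -> (t <= k)%N ->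
          I (t - r)%N b)].

End Defs.

From HB Require Import structures.
From mathcomp Require Import all_boot all_order all_algebra.
From mathcomp Require Import all_classical all_reals all_analysis.
From mathcomp Require Import lra.
Set Implicit Arguments. Unset Strict Implicit. Unset Printing Implicit Defensive.
Import Order.TTheory GRing.Theory Num.Theory.
Import numFieldNormedType.Exports.
Local Open Scope classical_set_scope.
Local Open Scope ring_scope.

(* The region lies strictly below its ceiling H_alpha^r, and its closure
   contains an open piece F of that hyperplane (the facet).  A strict bound
   <x, beta> < c on the region becomes <y, beta> <= c on F, and whenever such
   bounds pin <y, beta> to a constant on F, beta is parallel to alpha, so
   beta = alpha as both are positive roots.  Hence: (i) a decomposition of alpha
   of total rank t gives r = <y, alpha> <= t on F; (ii) alpha = beta + gamma
   with beta in I_i, gamma in I_j and i + j = r pins <y, beta> = i, forcing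
   gamma = 0; (iii) if r_{alpha+beta} = t <= k and some point of the region has
   <x, beta> >= t - r, the connected region avoids H_beta^{t-r} and so lies
   strictly above it, which pins <y, beta> = t - r on F; then beta = alpha and
   t = 2r. *)

Section InnerProduct.
Variables (R : realType) (n : nat).
Notation V := 'rV[R]_n.
Implicit Types x y a b : V.

Lemma ipC x y : ip x y = ip y x.
Proof. by apply: eq_bigr => i _; rewrite mulrC. Qed.

Lemma ipDl x y a : ip (x + y) a = ip x a + ip y a.
Proof. by rewrite /ip -big_split; apply: eq_bigr => i _; rewrite mxE mulrDl. Qed.

Lemma ipZl (c : R) x a : ip (c *: x) a = c * ip x a.
Proof. by rewrite /ip mulr_sumr; apply: eq_bigr => i _; rewrite mxE mulrA. Qed.

Lemma ipNl x a : ip (- x) a = - ip x a.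
Proof. by rewrite -scaleN1r ipZl mulN1r. Qed.

Lemma ipBl x y a : ip (x - y) a = ip x a - ip y a.
Proof. by rewrite ipDl ipNl. Qed.

Lemma ip0l a : ip 0 a = 0.
Proof. by rewrite -(scale0r 0) ipZl mul0r. Qed.

Lemma ipDr x y a : ip a (x + y) = ip a x + ip a y.
Proof. by rewrite ipC ipDl !(ipC a). Qed.

Lemma ipZr (c : R) x a : ip a (c *: x) = c * ip a x.
Proof. by rewrite ipC ipZl ipC. Qed.

Lemma ipNr x a : ip a (- x) = - ip a x.
Proof. by rewrite ipC ipNl ipC. Qed.

Lemma ipBr x y a : ip a (x - y) = ip a x - ip a y.
Proof. by rewrite ipDr ipNr. Qed.

Lemma ip_suml (T : Type) (s : seq T) (F : T -> V) a :
  ip (\sum_(p <- s) F p) a = \sum_(p <- s) ip (F p) a.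
Proof.
elim: s => [|p s IHs]; first by rewrite !big_nil ip0l.
by rewrite !big_cons ipDl IHs.
Qed.

Lemma ipxx_eq0 x : ip x x = 0 -> x = 0.
Proof.
move=> /eqP; rewrite psumr_eq0 => [/allP x0|i _]; last by rewrite -expr2 sqr_ge0.
apply/matrixP => i j; rewrite mxE (ord1 i).
by have /x0 := mem_index_enum j; rewrite /= mulf_eq0 orbb => /eqP.
Qed.

Lemma ip_continuous b : continuous (fun x : V => ip x b).
Proof.
apply: continuous_big => [|i _]; first exact: add_continuous.
by move=> x; apply: continuousM; [exact: coord_continuous | exact: cst_continuous].
Qed.

(* The orthogonal part v of b is parallel to the hyperplane, so y0 + s v stays
   in the ball for small s > 0, and <y0 + s v, b> - <y0, b> = s <v, v>. *)
Lemma const_on_hyperplane_ball_colinear a b y0 (c m e : R) :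
  a != 0 -> 0 < e -> ip y0 a = c ->
  (forall y, ip y a = c -> `|y - y0| < e -> ip y b = m) ->
  b = (ip b a / ip a a) *: a.
Proof.
move=> a0 e0 y0a b_const.
have aa0 : ip a a != 0 by apply: contra_neq a0; exact: ipxx_eq0.
set v := b - (ip b a / ip a a) *: a.
have va : ip v a = 0 by rewrite ipBl ipZl divfK // subrr.
set s := e / (`|v| + 1).
have s0 : 0 < s by rewrite divr_gt0 // ltr_wpDl.
have sv : `|s *: v| < e.
  by rewrite normrZ gtr0_norm // mulrAC ltr_pdivrMr ?ltr_wpDl // mulrDr mulr1 ltrDl.
have y0b : ip y0 b = m by apply: b_const; rewrite ?subrr ?normr0.
have := b_const (y0 + s *: v); rewrite addrAC subrr add0r ipDl ipZl va mulr0 addr0.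
move=> /(_ y0a sv) /eqP; rewrite ipDl ipZl y0b -[X in _ == X]addr0 (inj_eq (addrI m)).
rewrite mulf_eq0 gt_eqF //= => /eqP vb.
have vv : ip v v = 0 by rewrite [in X in ip _ X]/v ipBr ipZr vb va mulr0 subrr.
by apply/eqP; rewrite -subr_eq0; apply/eqP; exact: ipxx_eq0.
Qed.

End InnerProduct.

Arguments ip_continuous {R n} b.

Section LevelSets.
Context {R : realType} {T : topologicalType} {f : T -> R}.
Hypothesis f_cont : continuous f.

Lemma closure_lt_le (A : set T) (c : R) :
  (forall x, A x -> f x < c) -> closure A `<=` [set y | f y <= c].
Proof.
move=> Alt; have cl : closed (f @^-1` [set u | u <= c]).
  by apply: preimage_closed; [move=> x _; exact: f_cont | exact: closed_le].
by rewrite [X in _ `<=` X](closure_id _).1 //; apply: closureS => x /Alt /ltW.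
Qed.

Lemma closure_gt_ge (A : set T) (c : R) :
  (forall x, A x -> c < f x) -> closure A `<=` [set y | c <= f y].
Proof.
move=> Agt; have cl : closed (f @^-1` [set u | c <= u]).
  by apply: preimage_closed; [move=> x _; exact: f_cont | exact: closed_ge].
by rewrite [X in _ `<=` X](closure_id _).1 //; apply: closureS => x /Agt /ltW.
Qed.

Lemma connected_above_level (A : set T) (m : R) : connected A ->
  (forall z, A z -> f z != m) -> (exists2 z, A z & m < f z) ->
  forall z, A z -> m < f z.
Proof.
move=> A_conn A_avoid [z1 Az1 mz1].
have -> : A = A `&` [set z | m < f z].
  apply/esym/A_conn; first by exists z1.
    exists (f @^-1` [set u | m < u]) => //.
    by apply: open_comp; [move=> x _; exact: f_cont | exact: open_gt].
  exists (f @^-1` [set u | m <= u]).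
    by apply: preimage_closed; [move=> x _; exact: f_cont | exact: closed_ge].
  apply/seteqP; split=> z [Az mz]; split=> //=; first exact: ltW.
  by rewrite lt_neqAle eq_sym A_avoid.
by move=> z [].
Qed.

End LevelSets.

Lemma catalan_regionP (R : realType) (n : nat) (Phi : seq 'rV[R]_n) (k : nat)
    (Rg : set 'rV[R]_n) :
  catalan_region Phi k Rg ->
  [/\ exists x, Rg x, Rg `<=` catalan_complement Phi k & connected Rg].
Proof.
move=> [x [Cx ->]]; split; first by exists x; exact: connected_component_refl.
  exact: connected_component_sub.
exact: component_connected.
Qed.

Lemma decomp_theta_lt (R : realType) (n : nat) (Phi S : seq 'rV[R]_n)
    (Rg : set 'rV[R]_n) (k : nat) (v x : 'rV[R]_n) (t : nat) :
  decomp (theta Phi S Rg) k v t -> Rg x -> ip x v < t%:R.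
Proof.
move=> [s [s_neq0 s_theta -> ->]] Rx.
rewrite ipC ip_suml natr_sum big_seq_cond [ltRHS]big_seq_cond.
apply: ltr_sum => [|p /andP[/s_theta[_ _ [_ [_ p_lt]]] _]]; last by rewrite ipC p_lt.
by case: s s_neq0 {s_theta} => // p s _; rewrite /= mem_head.
Qed.

Lemma ceiling_lt (R : realType) (n : nat) (Phi : seq 'rV[R]_n) (k : nat)
    (Rg : set 'rV[R]_n) (alpha x : 'rV[R]_n) (r : nat) :
  ceiling Phi k Rg alpha r -> Rg x -> ip x alpha < r%:R.
Proof.
move=> [_ _ side] /side {side}; rewrite ip0l sub0r mulNr oppr_gt0.
case: r => [|r]; first by rewrite mul0r ltxx.
by rewrite pmulr_rlt0 // subr_lt0.
Qed.

Section CeilingFacet.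
Variables (R : realType) (n : nat) (Phi S : seq 'rV[R]_n) (k : nat).
Variables (Rg : set 'rV[R]_n) (x0 alpha y0 : 'rV[R]_n) (r : nat) (e : R).

Hypothesis zero_notin_Phi : 0 \notin Phi.
Hypothesis Phi_reduced :
  forall a, a \in Phi -> forall c : R, c *: a \in Phi -> c = 1 \/ c = -1.
Hypothesis Rg_x0 : Rg x0.
Hypothesis Rg_sub : Rg `<=` catalan_complement Phi k.
Hypothesis Rg_conn : connected Rg.
Hypothesis Rg_dom : dominant Phi S Rg.
Hypothesis alpha_pos : positive_root Phi S alpha.
Hypothesis r_le_k : (r <= k)%N.
Hypothesis Rg_below : forall x, Rg x -> ip x alpha < r%:R.
Hypothesis e_gt0 : 0 < e.
Hypothesis y0_alpha : ip y0 alpha = r%:R.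
Hypothesis facet_closure :
  forall y, ip y alpha = r%:R -> `|y - y0| < e -> closure Rg y.

Local Notation I := (theta Phi S Rg).

Let alpha_neq0 : alpha != 0.
Proof. by apply: contraNneq zero_notin_Phi => <-; exact: alpha_pos.1. Qed.

Let r_gt0 : (0 < r)%N.
Proof.
by rewrite -(ltr0n R); exact: lt_trans (Rg_dom Rg_x0 alpha_pos) (Rg_below Rg_x0).
Qed.

Let theta_alpha : I r alpha.
Proof. by split; [rewrite -lt0n r_gt0 | split]. Qed.

Let facet_le b (c : R) : (forall x, Rg x -> ip x b < c) ->
  forall y, ip y alpha = r%:R -> `|y - y0| < e -> ip y b <= c.
Proof.
by move=> lt_c y ya yd; apply: (closure_lt_le (ip_continuous b) lt_c); exact: facet_closure.
Qed.

Let facet_ge b (c : R) : (forall x, Rg x -> c < ip x b) ->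
  forall y, ip y alpha = r%:R -> `|y - y0| < e -> c <= ip y b.
Proof.
by move=> gt_c y ya yd; apply: (closure_gt_ge (ip_continuous b) gt_c); exact: facet_closure.
Qed.

Lemma facet_const_root_eq b (m : R) : positive_root Phi S b ->
  (forall y, ip y alpha = r%:R -> `|y - y0| < e -> ip y b = m) -> b = alpha.
Proof.
move=> b_pos b_const.
have b_def := const_on_hyperplane_ball_colinear alpha_neq0 e_gt0 y0_alpha b_const.
move: (b_pos.1); rewrite b_def => /(Phi_reduced alpha_pos.1) [c1|cN1].
  by rewrite c1 scale1r.
have := Rg_dom Rg_x0 b_pos; rewrite b_def cN1 scaleN1r ipNr oppr_gt0.
by move=> /lt_trans/(_ (Rg_dom Rg_x0 alpha_pos)); rewrite ltxx.
Qed.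

Lemma r_val_alpha : r_val I k alpha r.
Proof.
split.
  exists [:: (alpha, r)]; rewrite !big_seq1; split=> // p; rewrite inE => /eqP -> /=.
  by split; [exact: r_gt0 | exact: r_le_k | exact: theta_alpha].
move=> t /decomp_theta_lt alpha_lt; rewrite -(ler_nat R) -y0_alpha.
by apply: facet_le alpha_lt _ y0_alpha _; rewrite subrr normr0.
Qed.

Lemma alpha_not_theta_sum i j : (i + j)%N = r ->
  ~ exists b c, [/\ I i b, I j c & alpha = b + c].
Proof.
move=> ij [b [c [[_ [b_pos b_lt]] [_ [c_pos c_lt]] alpha_bc]]].
have b_eq : b = alpha.
  apply: (facet_const_root_eq (m := i%:R)) b_pos _ => y ya yd.
  have := facet_le b_lt ya yd; have := facet_le c_lt ya yd.
  by move: ya; rewrite alpha_bc ipDr -ij natrD; lra.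
have c0 : c = 0.
  by rewrite b_eq in alpha_bc; apply: (addrI alpha); rewrite addr0 -alpha_bc.
by move: zero_notin_Phi; rewrite -c0 c_pos.1.
Qed.

Lemma Rg_above_level b t : positive_root Phi S b -> (t <= k)%N ->
  (exists2 x, Rg x & t%:R - r%:R <= ip x b) ->
  forall x, Rg x -> t%:R - r%:R < ip x b.
Proof.
move=> b_pos t_le_k [x1 Rx1 x1b].
have [t_lt_r|r_le_t] := ltnP t r.
  move=> x /Rg_dom /(_ b_pos); have : t%:R < r%:R :> R by rewrite ltr_nat.
  lra.
have avoid z : Rg z -> ip z b != (t - r)%:R.
  by move=> /Rg_sub; apply; [exact: b_pos.1 | exact: leq_trans (leq_subr r t) t_le_k].
rewrite -natrB //; apply: (connected_above_level (ip_continuous b) Rg_conn avoid).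
by exists x1 => //; rewrite lt_neqAle eq_sym avoid //= natrB.
Qed.

Lemma theta_sub_of_r_val_add b t : positive_root Phi S b ->
  r_val I k (alpha + b) t -> (t <= k)%N -> I (t - r) b.
Proof.
move=> b_pos [ab_decomp _] t_le_k.
have ab_lt := decomp_theta_lt ab_decomp.
have [b_lt|b_not_lt] := pselect (forall x, Rg x -> ip x b < t%:R - r%:R).
  have r_lt_t : (r < t)%N.
    rewrite -(ltr_nat R) -subr_gt0.
    exact: lt_trans (Rg_dom Rg_x0 b_pos) (b_lt _ Rg_x0).
  split; first by rewrite subn_eq0 -ltnNge.
  by split=> // x Rx; rewrite natrB 1?ltnW //; exact: b_lt.
have [x1 Rx1 x1b] : exists2 x1, Rg x1 & t%:R - r%:R <= ip x1 b.
  apply: contra_notP b_not_lt => no_x1 x Rx; rewrite ltNge; apply/negP => x_ge.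
  exact: no_x1 (ex_intro2 _ _ x Rx x_ge).
have above := Rg_above_level b_pos t_le_k (ex_intro2 _ _ x1 Rx1 x1b).
have b_const y : ip y alpha = r%:R -> `|y - y0| < e -> ip y b = t%:R - r%:R.
  move=> ya yd; apply/eqP; rewrite eq_le (facet_ge above ya yd) andbT.
  by have := facet_le ab_lt ya yd; rewrite ipDr ya; lra.
have b_eq := facet_const_root_eq b_pos b_const.
have : t%:R - r%:R = r%:R :> R by rewrite -(b_const y0) ?subrr ?normr0 // b_eq.
move=> /eqP; rewrite subr_eq -natrD eqr_nat => /eqP ->.
by rewrite addnK b_eq.
Qed.

Lemma ceiling_rank_indecomposable : rank_indecomposable Phi S k I alpha r.
Proof.
split; [exact: theta_alpha | exact: r_val_alpha | exact: alpha_not_theta_sum |].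
exact: theta_sub_of_r_val_add.
Qed.

End CeilingFacet.

Theorem lemma14 (R : realType) (n : nat) (Phi S : seq 'rV[R]_n) (k : nat)
    (Rg : set 'rV[R]_n) (alpha : 'rV[R]_n) (r : nat) :
  root_system Phi -> irreducible_rs Phi ->
  simple_system Phi S ->
  (0 < k)%N ->
  catalan_region Phi k Rg -> dominant Phi S Rg ->
  positive_root Phi S alpha ->
  ceiling Phi k Rg alpha r ->
  rank_indecomposable Phi S k (theta Phi S Rg) alpha r.
Proof.
move=> [zero_notin_Phi _ Phi_reduced _ _] _ _ _.
move=> /catalan_regionP[[x0 Rg_x0] Rg_sub Rg_conn] Rg_dom alpha_pos ceil.
have Rg_below x : Rg x -> ip x alpha < r%:R by exact: ceiling_lt ceil.
case: ceil => [[_ r_le_k [y0 y0_alpha [e e_gt0 facet_closure]]] _ _].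
exact: (ceiling_rank_indecomposable zero_notin_Phi Phi_reduced Rg_x0 Rg_sub Rg_conn
  Rg_dom alpha_pos r_le_k Rg_below e_gt0 y0_alpha facet_closure).
Qed.
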